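(* Let $\mathcal{A}=(Q,\delta,I,F)$ be a complete Büchi automaton, let $p,q\in Q$ with $p\preceq_{\mathit{di}}q$, let $\alpha$ be an infinite word and let $\mathcal{G}_\alpha=(V,E)$ be the run DAG of $\mathcal{A}$ over $\alpha$. Then for all $i\ge0$, if $(p,i)\in V$ and $(q,i)\in V$, then $\mathrm{rank}_\alpha(p,i)\le\mathrm{rank}_\alpha(q,i)$.
   Context: A Büchi automaton is $\mathcal{A}=(Q,\delta,I,F)$ over a finite alphabet $\Sigma$, $\delta:Q\times\Sigma\to2^Q$, complete if $\delta(q,a)\ne\emptyset$ always; $n=|Q|$. A run from $q$ on $\alpha=\alpha_0\alpha_1\cdots$ is a state sequence $\rho$ with $\rho_0=q$, $\rho_{i+1}\in\delta(\rho_i,\alpha_i)$. Direct simulation: in the game from $(p_0,r_0)$, in round $i$ Spoiler picks $p_i\xrightarrow{\alpha_i}p_{i+1}$ and Duplicator answers $r_i\xrightarrow{\alpha_i}r_{i+1}$; a Duplicator strategy is a map $\sigma$ with $\sigma(r,p\xrightarrow{a}p')\in\delta(r,a)$ (no lookahead). Duplicator wins if for all $i$, $p_i\in F$ implies $r_i\in F$. $p\preceq_{\mathit{di}}r$ iff Duplicator has a winning strategy from $(p,r)$. Run DAG: $\mathcal{G}_\alpha=(V,E)$ with $V\subseteq Q\times\omega$, $(q,i)\in V$ iff some run of $\mathcal{A}$ over $\alpha$ from an initial state has $\rho_i=q$, and $((q,i),(q',i'))\in E$ iff $i'=i+1$ and $q'\in\delta(q,\alpha_i)$. A vertex $(p,i)$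 is accepting if $p\in F$; finite in a subgraph if only finitely many vertices are reachable from it there; endangered if it cannot reach an accepting vertex there. Ranks: let $\mathcal{G}^0=\mathcal{G}_\alpha$, $j=0$; repeat until fixpoint or for at most $2n+1$ steps: assign rank $j$ to all finite vertices of $\mathcal{G}^j$, let $\mathcal{G}^{j+1}$ be $\mathcal{G}^j$ without them; assign rank $j+1$ to all endangered vertices of $\mathcal{G}^{j+1}$, let $\mathcal{G}^{j+2}$ be $\mathcal{G}^{j+1}$ without them; $j:=j+2$. Vertices never assigned a rank get rank $\omega$. $\mathrm{rank}_\alpha(v)$ is the rank of $v$. *)

From mathcomp Require Import all_boot.
From Stdlib Require Import Relation_Operators ClassicalDescription.

Set Implicit Arguments.
Unset Strict Implicit.
Unset Printing Implicit Defensive.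

Record buchi (Q Sigma : finType) := Buchi {
  delta : Q -> Sigma -> {set Q};
  init  : {set Q};
  acc   : {set Q} }.

Section Buchi.
Variables (Q Sigma : finType) (A : buchi Q Sigma).

Definition complete : Prop := forall q a, delta A q a != set0.

(* A Duplicator strategy: sigma r p a p' is Duplicator's answer from r
   to Spoiler's move p -a-> p'. *)
Definition dup_strategy := Q -> Q -> Sigma -> Q -> Q.

Definition valid_strategy (s : dup_strategy) : Prop :=
  forall r p a p', p' \in delta A p a -> s r p a p' \in delta A r a.

Definition spoiler_play (p0 : Q) (ps : nat -> Q) (w : nat -> Sigma) : Prop :=
  ps 0 = p0 /\ forall i, ps i.+1 \in delta A (ps i) (w i).

Fixpoint dup_states (s : dup_strategy) (r0 : Q) (ps : nat -> Q)
    (w : nat -> Sigma) (i : nat) : Q :=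
  match i with
  | 0 => r0
  | i'.+1 => s (dup_states s r0 ps w i') (ps i') (w i') (ps i'.+1)
  end.

Definition dsim (p r : Q) : Prop :=
  exists s : dup_strategy, valid_strategy s /\
    forall ps w, spoiler_play p ps w ->
      forall i, ps i \in acc A -> dup_states s r ps w i \in acc A.

Definition run_from (q : Q) (alpha : nat -> Sigma) (rho : nat -> Q) : Prop :=
  rho 0 = q /\ forall i, rho i.+1 \in delta A (rho i) (alpha i).

Definition inV (alpha : nat -> Sigma) (v : Q * nat) : Prop :=
  exists rho, rho 0 \in init A /\ run_from (rho 0) alpha rho /\ rho v.2 = v.1.

Definition edge (alpha : nat -> Sigma) (v v' : Q * nat) : Prop :=
  inV alpha v /\ inV alpha v' /\ v'.2 = v.2.+1 /\ v'.1 \in delta A v.1 (alpha v.2).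

(* a subgraph is given by its set of vertices (a subset of V); edges are the
   induced ones *)
Definition subedge (alpha : nat -> Sigma) (G : Q * nat -> Prop) (v v' : Q * nat) :=
  G v /\ G v' /\ edge alpha v v'.

Definition reach (alpha : nat -> Sigma) (G : Q * nat -> Prop) (v w : Q * nat) :=
  G v /\ clos_refl_trans _ (subedge alpha G) v w.

Definition finite_in (alpha : nat -> Sigma) (G : Q * nat -> Prop) (v : Q * nat) :=
  exists s : seq (Q * nat), forall w, reach alpha G v w -> w \in s.

Definition endangered_in (alpha : nat -> Sigma) (G : Q * nat -> Prop) (v : Q * nat) :=
  ~ exists w, reach alpha G v w /\ w.1 \in acc A.

Definition removed (alpha : nat -> Sigma) (G : Q * nat -> Prop) (j : nat)
    (v : Q * nat) : Prop :=
  if odd j then endangered_in alpha G v else finite_in alpha G v.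

Fixpoint subgraph (alpha : nat -> Sigma) (j : nat) : Q * nat -> Prop :=
  match j with
  | 0 => inV alpha
  | j'.+1 => fun v => subgraph alpha j' v /\ ~ removed alpha (subgraph alpha j') j' v
  end.

Definition gets_rank (alpha : nat -> Sigma) (j : nat) (v : Q * nat) : Prop :=
  subgraph alpha j v /\ removed alpha (subgraph alpha j) j v.

(* rank: the (unique) j <= 2n assigned to v, None standing for omega *)
Fixpoint rank_from (alpha : nat -> Sigma) (v : Q * nat) (k j : nat) : option nat :=
  match k with
  | 0 => None
  | k'.+1 => if excluded_middle_informative (gets_rank alpha j v) then Some j
             else rank_from alpha v k' j.+1
  end.

Definition rank (alpha : nat -> Sigma) (v : Q * nat) : option nat :=
  rank_from alpha v (2 * #|Q|).+1 0.

End Buchi.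

(* order on {0,1,...} u {omega}, with None = omega *)
Definition rank_le (x y : option nat) : Prop :=
  match x, y with
  | _, None => True
  | None, Some _ => False
  | Some a, Some b => (a <= b)%N
  end.

From mathcomp Require Import all_boot.
From Stdlib Require Import Relation_Operators Operators_Properties.
From Stdlib Require Import Classical.
From Stdlib Require ClassicalDescription.

Set Implicit Arguments.
Unset Strict Implicit.
Unset Printing Implicit Defensive.

(* Direct simulation lets every path of the run DAG leaving (p, i) be
   shadowed, level by level, by a path leaving (q, i) through states that
   simulate it; completeness makes the shadow a path of the DAG.  By induction
   on j, each G^j is therefore upward closed under simulation: if (q, i) is
   finite in G^j, the levels reachable from (p, i) are bounded, so (p, i) is
   finite as well; if (q, i) is endangered, so is (p, i), since simulation
   transfers acceptance.  Hence (p, i) leaves the sequence G^0, G^1, ... no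
   later than (q, i), which is the rank inequality. *)

Section Simulation.
Variables (Q Sigma : finType) (A : buchi Q Sigma).
Hypothesis A_complete : complete A.

Lemma complete_run_from x (w : nat -> Sigma) : exists rho, run_from A x w rho.
Proof.
have pick_delta y a :
    exists2 z, [pick z in delta A y a] = Some z & z \in delta A y a.
  case: pickP => [z|none]; first by exists z.
  by case/set0Pn: (A_complete y a) => z; rewrite none.
pose fix rho n :=
  if n is n'.+1 then odflt x [pick z in delta A (rho n') (w n')] else x.
exists rho; split=> // n /=.
by have [z -> ] := pick_delta (rho n) (w n).
Qed.

(* The letter [a] only witnesses that some play from x exists. *)
Lemma dsim_acc (a : Sigma) x r : dsim A x r -> x \in acc A -> r \in acc A.
Proof.
move=> [s [_ s_wins]] x_acc.
have [ps [ps0 ps_step]] := complete_run_from x (fun=> a).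
by apply: (s_wins ps (fun=> a) (conj ps0 ps_step) 0); rewrite ps0.
Qed.

(* Plays from x' are tails of plays from x, so the strategy winning from
   (x, r) still wins from the answered position. *)
Lemma dsim_step x r a x' : dsim A x r -> x' \in delta A x a ->
  exists2 r', r' \in delta A r a & dsim A x' r'.
Proof.
move=> [s [s_valid s_wins]] xx'; exists (s r x a x'); first exact: s_valid.
exists s; split=> // ps w [ps0 ps_step].
pose ps_x n := if n is n'.+1 then ps n' else x.
pose w_a n := if n is n'.+1 then w n' else a.
have play : spoiler_play A x ps_x w_a.
  by split=> // -[|n] /=; rewrite ?ps0.
have shift n : dup_states s r ps_x w_a n.+1 = dup_states s (s r x a x') ps w n.
  by elim: n => [|n /= <-] /=; rewrite ?ps0.
by move=> i ps_acc; rewrite -shift; apply: (s_wins _ _ play i.+1).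
Qed.

End Simulation.

Section RunDAG.
Variables (Q Sigma : finType) (A : buchi Q Sigma) (alpha : nat -> Sigma).
Hypothesis A_complete : complete A.

Notation V := (inV A alpha).
Notation reachG := (reach A alpha).

Lemma inV_step r k r' : V (r, k) -> r' \in delta A r (alpha k) -> V (r', k.+1).
Proof.
move=> [rho [rho0 [[_ rho_step] /= rho_k]]] rr'.
have [tl [tl0 tl_step]] :=
  complete_run_from A_complete r' (fun n => alpha (n + k.+1)).
pose rho' n := if n <= k then rho n else tl (n - k.+1).
exists rho'; split; first by rewrite /rho' leq0n.
split; last by rewrite /= /rho' ltnn subnn.
split=> // n; rewrite /rho'; case: (ltngtP n k) => [n_lt|n_gt|->].
- exact: rho_step.
- by rewrite subSn //; move: (tl_step (n - k.+1)); rewrite subnK.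
- by rewrite subnn tl0 rho_k.
Qed.

Lemma subgraph_inV j v : subgraph A alpha j v -> V v.
Proof. by elim: j v => [|j IH] v //= [/IH]. Qed.

Lemma reach_in G v w : reachG G v w -> G w.
Proof. by move=> [Gv /clos_rt_rtn1_iff [|? ? [_ []]]]. Qed.

Definition dsim_closed (G : Q * nat -> Prop) : Prop :=
  forall x y k, G (x, k) -> V (y, k) -> dsim A x y -> G (y, k).

Section Shadow.
Variable G : Q * nat -> Prop.
Hypotheses (G_V : forall v, G v -> V v) (G_closed : dsim_closed G).
Variables (p q : Q) (i : nat).
Hypotheses (pq : dsim A p q) (Gp : G (p, i)) (Vq : V (q, i)).

Lemma reach_dsim v : reachG G (p, i) v ->
  exists2 r, dsim A v.1 r & reachG G (q, i) (r, v.2).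
Proof.
have Gq := G_closed Gp Vq pq.
move=> [_ /clos_rt_rtn1_iff path_pv].
elim: path_pv => [|[y k] [z l] yz _ [r /= yr qr]].
  by exists q => //; split => //; apply: rt_refl.
move: yz => [_ [Gz [_ [_ [/= l_eq yz]]]]]; subst l.
have [r' rr' zr'] := dsim_step yr yz.
have Vr : V (r, k) := G_V (reach_in qr).
have Vr' : V (r', k.+1) := inV_step Vr rr'.
have Gr' : G (r', k.+1) := G_closed Gz Vr' zr'.
exists r' => //; split => //; apply: rt_trans (proj2 qr) _; apply: rt_step.
by do !split => //; apply: reach_in qr.
Qed.

Lemma finite_in_dsim :
  finite_in A alpha G (q, i) -> finite_in A alpha G (p, i).
Proof.
move=> [s reach_s]; pose M := \max_(w <- s) w.2.
exists [seq (x, k) | x <- enum Q, k <- iota 0 M.+1] => -[x k] /reach_dsim [r _].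
move=> /reach_s rk_s; have k_le : k <= M := leq_bigmax_seq (r, k) rk_s isT.
by apply: allpairs_f; rewrite ?mem_enum ?mem_iota.
Qed.

Lemma endangered_in_dsim :
  endangered_in A alpha G (q, i) -> endangered_in A alpha G (p, i).
Proof.
move=> q_safe [w [/reach_dsim [r wr qr] w_acc]]; apply: q_safe.
by exists (r, w.2); split; last exact: (dsim_acc A_complete (alpha 0) wr w_acc).
Qed.

End Shadow.

Lemma subgraph_dsim_closed j : dsim_closed (subgraph A alpha j).
Proof.
elim: j => [|j IH] x y k //= [Gx x_kept] Vy xy; have Gy := IH _ _ _ Gx Vy xy.
split=> //; rewrite /removed in x_kept *; case: (odd j) in x_kept *.
- by move/(endangered_in_dsim (@subgraph_inV j) IH xy Gx Vy).
- by move/(finite_in_dsim (@subgraph_inV j) IH xy Gx Vy).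
Qed.

End RunDAG.

Section Rank.
Variables (Q Sigma : finType) (A : buchi Q Sigma) (alpha : nat -> Sigma).

Lemma rank_from_Some v k j b : rank_from A alpha v k j = Some b ->
  gets_rank A alpha b v /\ j <= b < j + k.
Proof.
elim: k j => [|k IH] j //=.
case: ClassicalDescription.excluded_middle_informative.
  by move=> v_ranked [<-]; rewrite leqnn addnS ltnS leq_addr.
move=> _ /IH [b_ranked /andP [j_lt_b b_lt]].
by rewrite addnS -addSn b_lt (ltnW j_lt_b).
Qed.

Lemma rank_from_le v k j m : gets_rank A alpha m v -> j <= m < j + k ->
  rank_le (rank_from A alpha v k j) (Some m).
Proof.
elim: k j => [|k IH] j m_ranked /andP [j_le_m m_lt] /=.
  by move: (leq_ltn_trans j_le_m m_lt); rewrite addn0 ltnn.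
case: ClassicalDescription.excluded_middle_informative => // j_unranked.
apply: IH; rewrite // addSn -addnS m_lt andbT ltn_neqAle j_le_m andbT.
by apply: contraPneq j_unranked => ->.
Qed.

Lemma not_subgraph_gets_rank v b :
  inV A alpha v -> ~ subgraph A alpha b.+1 v ->
  exists2 j, j <= b & gets_rank A alpha j v.
Proof.
move=> Vv; elim: b => [|b IH] /= not_kept.
  by exists 0 => //; split => //; apply: NNPP => ?; apply: not_kept.
have [kept|/IH [j j_le j_ranked]] := classic (subgraph A alpha b.+1 v).
  by exists b.+1 => //; split => //; apply: NNPP => ?; apply: not_kept.
by exists j => //; apply: leqW.
Qed.

Lemma rank_le_not_subgraph v b : inV A alpha v -> ~ subgraph A alpha b.+1 v ->
  b <= 2 * #|Q| -> rank_le (rank A alpha v) (Some b).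
Proof.
move=> Vv not_kept b_le.
have [j j_le j_ranked] := not_subgraph_gets_rank Vv not_kept.
have := rank_from_le (k := (2 * #|Q|).+1) (j := 0) j_ranked
  (leq_trans j_le b_le).
by rewrite /rank; case: rank_from => // m /leq_trans; apply.
Qed.

End Rank.

Theorem lemma7 (Q Sigma : finType) (A : buchi Q Sigma) (p q : Q)
  (alpha : nat -> Sigma) :
  complete A -> dsim A p q ->
  forall i : nat, inV A alpha (p, i) -> inV A alpha (q, i) ->
    rank_le (rank A alpha (p, i)) (rank A alpha (q, i)).
Proof.
move=> A_complete pq i Vp Vq.
case q_rank: (rank A alpha (q, i)) => [b|]; last by case: rank.
have [[_ q_removed] /andP [_ b_lt]] := rank_from_Some q_rank.
apply: rank_le_not_subgraph Vp _ b_lt => Gp.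
by have [_] := subgraph_dsim_closed A_complete Gp Vq pq.
Qed.
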